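(* Let $M:Z^n\times Z\to[0,B]$ be an $(\epsilon,\delta)$-differentially private evaluation algorithm and let $P$ be an arbitrary distribution over $Z$. Then for every positive integer $k$, $$\mathbb{E}_{S,S'\sim P^n}\Big[\big(\mathcal{E}_{S'}[M(S)]\big)^k\Big]\le e^{k^2\epsilon}\cdot\mathbb{E}_{S\sim P^n}\Big[\big(\mathcal{E}_S[M(S)]+k\delta B\big)^k\Big].$$
   Context: $M$ is an $(\epsilon,\delta)$-differentially private evaluation algorithm if for every $z\in Z$, the randomized output $M(S,z)$ is $(\epsilon,\delta)$-differentially private with respect to $S$: for all $S,S'\in Z^n$ differing in a single element and every set $O$, $\Pr[M(S,z)\in O]\le e^{\epsilon}\Pr[M(S',z)\in O]+\delta$. For $S=(z_1,\dots,z_n)$ and $S'=(z'_1,\dots,z'_n)$ drawn independently from $P^n$, $\mathcal{E}_S[M(S)]=\frac1n\sum_{i\in[n]}\mathbb{E}_M[M(S,z_i)]$ and $\mathcal{E}_{S'}[M(S)]=\frac1n\sum_{i\in[n]}\mathbb{E}_M[M(S,z'_i)]$. *)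

From HB Require Import structures.
From mathcomp Require Import all_boot all_order all_algebra.
From mathcomp Require Import all_classical all_reals all_analysis measurable_realfun.
Set Implicit Arguments. Unset Strict Implicit. Unset Printing Implicit Defensive.
Import Order.TTheory GRing.Theory Num.Theory.
Local Open Scope classical_set_scope.
Local Open Scope ring_scope.

(* A randomized evaluation algorithm M : Z^n x Z -> R is represented by the
   law (output distribution) M S z of its random output, a probability
   measure on the reals. *)
Definition mechanism d (Z : measurableType d) (R : realType) (n : nat) :=
  n.-tuple Z -> Z -> probability R R.

Definition neighbors d (Z : measurableType d) (n : nat) (S S' : n.-tuple Z) :=
  S <> S' /\ exists i : 'I_n, forall j : 'I_n, j != i -> tnth S j = tnth S' j.

Definition dp_eval d (Z : measurableType d) (R : realType) (n : nat)
  (M : mechanism Z R n) (eps delta : R) :=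
  forall (z : Z) (S S' : n.-tuple Z), neighbors S S' ->
  forall O : set R, measurable O ->
    (M S z O <= (expR eps)%:E * M S' z O + delta%:E)%E.

Definition bounded_in d (Z : measurableType d) (R : realType) (n : nat)
  (M : mechanism Z R n) (B : R) :=
  forall S z, M S z `[0, B]%classic = 1%E.

Definition mech_measurable d (Z : measurableType d) (R : realType) (n : nat)
  (M : mechanism Z R n) :=
  forall O : set R, measurable O ->
    measurable_fun [set: n.-tuple Z * Z] (fun p => M p.1 p.2 O).

Definition mech_mean d (Z : measurableType d) (R : realType) (n : nat)
  (M : mechanism Z R n) (S : n.-tuple Z) (z : Z) : R :=
  Rintegral (M S z) [set: R] id.

Definition emp_eval d (Z : measurableType d) (R : realType) (n : nat)
  (M : mechanism Z R n) (S T : n.-tuple Z) : R :=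
  (n%:R)^-1 * \sum_(i < n) mech_mean M S (tnth T i).

Definition is_product_prob d (Z : measurableType d) (R : realType) (n : nat)
  (P : probability Z R) (Pn : probability (n.-tuple Z) R) :=
  forall A : 'I_n -> set Z, (forall i, measurable (A i)) ->
    Pn [set S | forall i, A i (tnth S i)] = (\prod_(i < n) P (A i))%E.

From HB Require Import structures.
From mathcomp Require Import all_boot all_order all_algebra.
From mathcomp Require Import all_classical all_reals all_analysis measurable_realfun.
From mathcomp Require Import lra.
Import Order.TTheory GRing.Theory Num.Theory.
Local Open Scope classical_set_scope.
Local Open Scope ring_scope.
Set Implicit Arguments. Unset Strict Implicit. Unset Printing Implicit Defensive.

(* Expanding the k-th power of the empirical mean over S' writes the left-hand
   side as n^-k times a sum, over maps f : [k] -> [n], of the expectation of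
   prod_t E_M[M(S, z'_(f t))].  Exchanging the entries of S and S' indexed by
   the image of f preserves the law of (S, S'), and turns this term into a
   product of means of M at a dataset T that differs from S in at most k
   entries, evaluated at entries of S.  Group privacy (the (eps, delta)
   guarantee, transferred from events to means of [0, B]-valued outputs by the
   layer-cake formula, and iterated along a path from T to S) bounds each factor
   by e^(k eps) (E_M[M(S, z_(f t))] + k delta B); summing back over f yields the
   k-th power of E_S[M(S)] + k delta B. *)

Section tuple_mix.
Context (T : eqType) (n : nat).
Implicit Types (I : {set 'I_n}) (S : n.-tuple T).

Definition tmix I S (S' : n.-tuple T) : n.-tuple T :=
  [tuple if j \in I then tnth S' j else tnth S j | j < n].

Lemma tnth_tmix I S (S' : n.-tuple T) j :
  tnth (tmix I S S') j = if j \in I then tnth S' j else tnth S j.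
Proof. by rewrite tnth_map tnth_ord_tuple. Qed.

Definition tdiff S (S' : n.-tuple T) : {set 'I_n} := [set j | tnth S j != tnth S' j].

Lemma tdiff_card0 S (S' : n.-tuple T) : (#|tdiff S S'| == 0)%N = (S == S').
Proof.
rewrite cards_eq0; apply/eqP/eqP => [E|->]; last by apply/setP => j; rewrite !inE eqxx.
apply: eq_from_tnth => j; apply/eqP/negPn.
by move/setP/(_ j): E; rewrite !inE => ->.
Qed.

Lemma tdiff_tmix1 S (S' : n.-tuple T) j : tdiff (tmix [set j] S S') S' = tdiff S S' :\ j.
Proof.
apply/setP => i; rewrite !inE tnth_tmix !inE.
by have [->|ne] := eqVneq i j; rewrite ?eqxx //= ifN.
Qed.

Lemma tdiff_tmix_subset I S (S' : n.-tuple T) : tdiff (tmix I S S') S \subset I.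
Proof.
by apply/fintype.subsetP => j; rewrite inE tnth_tmix; case: (j \in I); rewrite ?eqxx.
Qed.

End tuple_mix.

Lemma neighbors_tmix1 d (Z : measurableType d) n (S S' : n.-tuple Z) j :
  tnth S j != tnth S' j -> neighbors S (tmix [set j] S S').
Proof.
move=> hj; split.
  by move/(congr1 (fun s => tnth s j)); rewrite tnth_tmix set11 => /eqP; apply/negP.
by exists j => i ij; rewrite tnth_tmix inE (negbTE ij).
Qed.

Section group_privacy.
Context d (Z : measurableType d) (R : realType) (n : nat).
Variables (m : n.-tuple Z -> R) (a c : R).
Hypotheses (a_ge1 : 1 <= a) (c_ge0 : 0 <= c) (m_ge0 : forall S, 0 <= m S).
Hypothesis m_neighbors : forall S S', neighbors S S' -> m S <= a * m S' + c.

Lemma group_privacy r (S S' : n.-tuple Z) : (#|tdiff S S'| <= r)%N ->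
  m S <= a ^+ r * (m S' + r%:R * c).
Proof.
have a_ge0 : 0 <= a := le_trans ler01 a_ge1.
elim: r S => [|r IH] S hr.
  by move: hr; rewrite leqn0 tdiff_card0 => /eqP ->; rewrite expr0 mul1r mul0r addr0.
have [/eqP|/card_gt0P[j]] := posnP #|tdiff S S'|.
  rewrite tdiff_card0 => /eqP ->.
  apply: le_trans (ler_peMl _ (exprn_ege1 r.+1 a_ge1)); last first.
    by rewrite addr_ge0 ?mulr_ge0.
  by rewrite lerDl mulr_ge0.
rewrite inE => hj.
have hr1 : (#|tdiff (tmix [set j] S S') S'| <= r)%N.
  by move: hr; rewrite tdiff_tmix1 (cardsD1 j) inE hj.
have step := m_neighbors (neighbors_tmix1 hj).
have := ler_wpM2l a_ge0 (IH _ hr1).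
have : c <= a ^+ r.+1 * c by rewrite ler_peMl ?exprn_ege1.
rewrite exprS -nat1r; lra.
Qed.

End group_privacy.

Section approx_dp_integral.
Context d (T : measurableType d) (R : realType).
Local Open Scope ereal_scope.
Implicit Types (mu nu : probability T R) (f : {mfun T >-> R}).

Lemma ge0_integral_ccdf_bounded mu f (B : R) : (0 <= B)%R ->
  (forall t, 0 <= f t <= B)%R ->
  \int[mu]_t (f t)%:E =
  \int[lebesgue_measure]_(r in `[0%R, B[) mu (f @^-1` `]r, +oo[).
Proof.
move=> B0 fB; rewrite -expectation_def ge0_expectation_ccdf; last first.
  by move=> t; have /andP[] := fB t.
rewrite (@itv_bndbnd_setU _ _ _ (BLeft B)) ?bnd_simp //.
rewrite ge0_integral_setU //=.
- rewrite [X in _ + X]integral0_eq ?adde0 // => r.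
  rewrite /= in_itv /= andbT => Br; change (mu (f @^-1` `]r, +oo[) = 0).
  rewrite -(measure0 mu); congr (mu _); apply/seteqP; split => // t /=.
  rewrite in_itv /= andbT => rft; have /andP[_ ftB] := fB t.
  by have := lt_le_trans rft (le_trans ftB Br); rewrite ltxx.
- rewrite -itv_bndbnd_setU ?bnd_simp //.
  exact: measurable_funS (ccdf_measurable f).
- apply: (@lt_disjoint _ `[0%R, B[ `[B, +oo[) => x y.
  by rewrite !in_itv /= andbT => /andP[_]; exact: lt_le_trans.
Qed.

Lemma le_integral_approx_dp mu nu f (a del B : R) :
  (0 <= a)%R -> (0 <= del)%R -> (0 <= B)%R -> (forall t, 0 <= f t <= B)%R ->
  (forall O, measurable O -> mu O <= a%:E * nu O + del%:E) ->
  \int[mu]_t (f t)%:E <= a%:E * \int[nu]_t (f t)%:E + (del * B)%:E.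
Proof.
move=> a0 del0 B0 fB dp.
rewrite !(ge0_integral_ccdf_bounded _ B0 fB).
have mI : measurable (`[0%R, B[%classic : set R) by [].
have mccdf (P : probability T R) :
    measurable_fun `[0%R, B[ (fun r => P (f @^-1` `]r, +oo[)).
  exact: measurable_funS (ccdf_measurable f).
have int_del : \int[lebesgue_measure]_(r in `[0%R, B[) cst del%:E r = (del * B)%:E.
  rewrite integral_cst // -[X in _ * X]/(@lebesgue_measure R `[0%R, B[%classic).
  rewrite lebesgue_measure_itv /= lte_fin EFinM.
  by move: B0; rewrite le_eqVlt => /predU1P[<-|->]; rewrite ?ltxx ?mule0 // oppr0 adde0.
have -> : a%:E * \int[lebesgue_measure]_(r in `[0%R, B[) nu (f @^-1` `]r, +oo[)
    + (del * B)%:E = \int[lebesgue_measure]_(r in `[0%R, B[)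
    (a%:E * nu (f @^-1` `]r, +oo[) + cst del%:E r).
  rewrite ge0_integralD //; last 2 first.
  - by move=> r _; rewrite mule_ge0.
  - by apply: emeasurable_funM => //; exact: mccdf.
  rewrite ge0_integralZl_EFin //; last exact: mccdf.
  by congr (_ + _); exact/esym.
apply: ge0_le_integral => //.
- exact: mccdf.
- by apply: emeasurable_funD => //; apply: emeasurable_funM => //; exact: mccdf.
- move=> r _; apply: dp.
  by rewrite -[X in measurable X]setTI; exact: measurable_funP.
Qed.

End approx_dp_integral.

Section tswap_invariance.
Context d (Z : measurableType d) (R : realType) (n : nat).
Implicit Types (A : 'I_n -> set Z) (I : {set 'I_n}).

Definition cylinder A : set (n.-tuple Z) := [set S | forall i, A i (tnth S i)].

Lemma measurable_cylinder A : (forall i, measurable (A i)) -> measurable (cylinder A).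
Proof.
move=> mA.
have -> : cylinder A = \bigcap_(i in [set: 'I_n]) ((fun S => tnth S i) @^-1` A i).
  by apply/seteqP; split => [S hS i _|S hS i]; [exact: hS | exact: hS].
apply: fin_bigcap_measurable => // i _.
by rewrite -[X in measurable X]setTI; exact: measurable_tnth.
Qed.

Lemma cylinderI A A' : cylinder A `&` cylinder A' = cylinder (fun i => A i `&` A' i).
Proof.
apply/seteqP; split => [S [hA hA'] i|S hS]; first by split.
by split => i; have [] := hS i.
Qed.

Definition cylinder_rectangles : set (set (n.-tuple Z * n.-tuple Z)) :=
  [set X | exists A A', [/\ forall i, measurable (A i), forall i, measurable (A' i)
    & X = cylinder A `*` cylinder A']].

Lemma measurable_cylinder_rectangles : measurable = <<s cylinder_rectangles >>.
Proof.
apply/seteqP; split; last first.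
  apply: smallest_sub; first exact: sigma_algebra_measurable.
  by move=> _ [A [A' [mA mA' ->]]]; apply: measurableX; exact: measurable_cylinder.
(* fst and snd are measurable for the sigma-algebra generated by the
   rectangles, hence so is the identity of the product. *)
pose G := g_sigma_algebraType cylinder_rectangles.
have coord_rect i E : measurable E ->
    cylinder_rectangles ((fun p => tnth p.1 i) @^-1` E) /\
    cylinder_rectangles ((fun p => tnth p.2 i) @^-1` E).
  move=> mE; pose Ei j := if j == i then E else setT.
  have mEi j : measurable (Ei j) by rewrite /Ei; case: eqP.
  split; [exists Ei, (fun=> setT) | exists (fun=> setT), Ei]; split => //;
    apply/seteqP; split => -[S S'] /=; rewrite /Ei;
    by [move=> hE; split => j //=; case: eqP => // ->
       |case=> /(_ i) + /(_ i); rewrite eqxx].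
have mfst : measurable_fun [set: G] (fst : G -> n.-tuple Z).
  apply/measurable_fun_tnthP => i _ E mE; rewrite setTI.
  by apply: sub_sigma_algebra; have [] := coord_rect i E mE.
have msnd : measurable_fun [set: G] (snd : G -> n.-tuple Z).
  apply/measurable_fun_tnthP => i _ E mE; rewrite setTI.
  by apply: sub_sigma_algebra; have [] := coord_rect i E mE.
have /(_ measurableT) mid : measurable_fun [set: G] (id : G -> n.-tuple Z * n.-tuple Z).
  exact/measurable_fun_pairP.
by move=> X mX; have := mid X mX; rewrite setTI.
Qed.

Definition tswap I (p : n.-tuple Z * n.-tuple Z) := (tmix I p.1 p.2, tmix I p.2 p.1).

Lemma measurable_tmix d' (X : measurableType d') I (f g : X -> n.-tuple Z) :
  measurable_fun setT f -> measurable_fun setT g ->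
  measurable_fun setT (fun x => tmix I (f x) (g x)).
Proof.
move=> mf mg; apply/measurable_fun_tnthP => j /=.
have -> : (fun S => tnth S j) \o (fun x => tmix I (f x) (g x)) =
    (fun S => tnth S j) \o if j \in I then g else f.
  by apply/funext => x /=; rewrite tnth_tmix; case: (j \in I).
by apply: measurableT_comp; [exact: measurable_tnth | case: (j \in I)].
Qed.

Lemma measurable_tswap I : measurable_fun setT (tswap I).
Proof. by apply: measurable_fun_pair; exact: measurable_tmix. Qed.

Lemma tswap_preimage_rect I A A' :
  tswap I @^-1` (cylinder A `*` cylinder A') =
  cylinder (fun j => if j \in I then A' j else A j) `*`
  cylinder (fun j => if j \in I then A j else A' j).
Proof.
apply/seteqP; split => -[S S'] [/= hA hA']; split => j /=;
  by move: (hA j) (hA' j); rewrite ?tnth_tmix; case: (j \in I).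
Qed.

Local Open Scope ereal_scope.
Variables (P : probability Z R) (Pn : probability (n.-tuple Z) R).
Hypothesis PnE : is_product_prob P Pn.

Lemma product_prob_rect A A' :
  (forall i, measurable (A i)) -> (forall i, measurable (A' i)) ->
  (Pn \x Pn) (cylinder A `*` cylinder A') = \prod_i (P (A i) * P (A' i)).
Proof.
move=> mA mA'; rewrite product_measure1E ?big_split /=; try exact: measurable_cylinder.
by rewrite -PnE // -PnE.
Qed.

Lemma product_prob_tswap I X : measurable X ->
  (Pn \x Pn) (tswap I @^-1` X) = (Pn \x Pn) X.
Proof.
apply: (measure_unique cylinder_rectangles (fun=> setT)
  measurable_cylinder_rectangles _ _ _ (pushforward (Pn \x Pn) (tswap I))).
- move=> _ _ [A1 [A1' [mA1 mA1' ->]]] [A2 [A2' [mA2 mA2' ->]]].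
  exists (fun i => A1 i `&` A2 i), (fun i => A1' i `&` A2' i).
  by rewrite -setXI !cylinderI; split => // i; exact: measurableI.
- move=> _; exists (fun=> setT), (fun=> setT); split => //.
  by apply/seteqP; split => // p _; split => i.
- by rewrite bigcup_const.
- exact: measurable_tswap.
- move=> mt _ [A [A' [mA mA' ->]]].
  rewrite -[LHS]/((Pn \x Pn) (tswap I @^-1` (cylinder A `*` cylinder A'))).
  rewrite -[RHS]/((Pn \x Pn) (cylinder A `*` cylinder A')).
  rewrite tswap_preimage_rect !product_prob_rect //; try by move=> j; case: (j \in I).
  by apply: eq_bigr => j _; case: (j \in I); rewrite // muleC.
- move=> mt _; rewrite -[X in X < _]/((Pn \x Pn) (tswap I @^-1` setT)).
  rewrite preimage_setT -setXTT product_measure1E // -[X in X < _]/(Pn setT * Pn setT).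
  by rewrite probability_setT mule1 ltry.
Qed.

Lemma integral_tswap I (F : n.-tuple Z * n.-tuple Z -> \bar R) :
  measurable_fun setT F -> (forall p, 0 <= F p) ->
  \int[Pn \x Pn]_p F (tswap I p) = \int[Pn \x Pn]_p F p.
Proof.
move=> mF F0.
have := ge0_integral_pushforward (measurable_tswap I) (Pn \x Pn) measurableT mF
  (fun p _ => F0 p).
rewrite preimage_setT => <-.
apply: eq_measure_integral => [|mt X mX _]; first exact: measurable_tswap.
exact: product_prob_tswap.
Qed.

End tswap_invariance.

Section clip.
Context (R : realType).

(* M S z is concentrated on [0, B], so its mean is the integral of the bounded
   measurable function clip B. *)
Definition clip (B y : R) : R := Num.min (Num.max y 0) B.

Lemma measurable_clip B : measurable_fun setT (clip B).
Proof. by apply: measurable_minr => //; exact: measurable_maxr. Qed.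

HB.instance Definition _ (B : R) :=
  isMeasurableFun.Build _ _ _ _ (clip B) (measurable_clip B).

Lemma clip_itv B y : 0 <= B -> 0 <= clip B y <= B.
Proof. by move=> B0; rewrite le_min B0 le_max lexx orbT ge_min lexx orbT. Qed.

Lemma clip_id B y : 0 <= y <= B -> clip B y = y.
Proof. by move=> /andP[y0 yB]; rewrite /clip (max_l y0) (min_l yB). Qed.

End clip.

Lemma probability_setT_neq0 d (T : measurableType d) (R : realType)
  (P : probability T R) : [set: T] !=set0.
Proof.
apply/set0P/negP => /eqP T0.
by have := probability_setT P; rewrite T0 measure0 => /eqP; rewrite eq_sym onee_eq0.
Qed.

Section mechanism_mean.
Context d (Z : measurableType d) (R : realType) (n : nat) (M : mechanism Z R n) (B : R).
Hypothesis MB : bounded_in M B.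

Lemma bounded_in_ge0 (z : Z) : 0 <= B.
Proof.
rewrite leNgt; apply/negP => B_lt0; have := MB [tuple z | _ < n] z.
rewrite set_itv_ge ?measure0 => [/eqP|]; first by rewrite eq_sym onee_eq0.
by rewrite bnd_simp -ltNge.
Qed.

Hypothesis B0 : 0 <= B.

Lemma mech_meanE S z : (mech_mean M S z)%:E = (\int[M S z]_y (clip B y)%:E)%E.
Proof.
have clipB y : 0 <= clip B y <= B := clip_itv y B0.
have mclip : measurable_fun setT (EFin \o clip B).
  by apply/measurable_EFinP; exact: measurable_clip.
have e : (\int[M S z]_y (clip B y)%:E = \int[M S z]_y y%:E)%E.
  apply: ae_eq_integral => //; exists (~` `[0, B]%classic); split.
  - exact: measurableC.
  - by rewrite -[LHS]/(M S z (~` `[0, B]%classic)) probability_setC // MB subee.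
  - by move=> y /= Ny yB; apply: Ny; rewrite clip_id // -in_itv; exact/set_mem.
rewrite /mech_mean /Rintegral -e fineK // ge0_fin_numE; last first.
  by apply: integral_ge0 => y _; rewrite lee_fin; case/andP: (clipB y).
apply: (@le_lt_trans _ _ (\int[M S z]_y (cst B%:E) y)%E).
  by apply: ge0_le_integral => //= y _; rewrite lee_fin; case/andP: (clipB y).
by rewrite integral_cst // -[X in (_ * X)%E]/(M S z setT) probability_setT mule1 ltry.
Qed.

Lemma mech_mean_ge0 S z : 0 <= mech_mean M S z.
Proof.
rewrite -lee_fin mech_meanE; apply: integral_ge0 => y _.
by rewrite lee_fin; case/andP: (clip_itv y B0).
Qed.

Lemma dp_mech_mean eps delta S S' z : 0 <= delta -> dp_eval M eps delta ->
  neighbors S S' -> mech_mean M S z <= expR eps * mech_mean M S' z + delta * B.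
Proof.
move=> delta0 dpM SS'; rewrite -lee_fin EFinD EFinM !mech_meanE.
by apply: le_integral_approx_dp => // [y|O mO]; [exact: clip_itv | exact: dpM].
Qed.

Lemma measurable_mech_mean : mech_measurable M ->
  measurable_fun setT (fun p : n.-tuple Z * Z => mech_mean M p.1 p.2).
Proof.
move=> mM.
apply: (eq_measurable_fun (fine \o fun p => \int[M p.1 p.2]_y (clip B y)%:E)%E).
  by move=> p _; rewrite /= -mech_meanE.
apply: measurableT_comp; first exact: fine_measurable.
apply: (measurable_fun_integral_kernel (l := fun p => M p.1 p.2)) => //.
- by move=> y; rewrite lee_fin; case/andP: (clip_itv y B0).
- by apply/measurable_EFinP; exact: measurable_clip.
Qed.

End mechanism_mean.

Lemma exprn_sum_ffun (R : comPzSemiRingType) (n k : nat) (x : 'I_n -> R) :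
  (\sum_(i < n) x i) ^+ k = \sum_(f : {ffun 'I_k -> 'I_n}) \prod_(t < k) x (f t).
Proof. by rewrite -[k in LHS]card_ord -prodr_const bigA_distr_bigA. Qed.

Lemma ge0_integral_exprn_sum d (T : measurableType d) (R : realType)
    (mu : {measure set T -> \bar R}) (n k : nat) (g : 'I_n -> T -> R) (c : R) :
  0 <= c -> (forall i, measurable_fun setT (g i)) -> (forall i x, 0 <= g i x) ->
  (\int[mu]_x ((c * \sum_i g i x) ^+ k)%:E =
   (c ^+ k)%:E * \sum_(f : {ffun 'I_k -> 'I_n}) \int[mu]_x (\prod_t g (f t) x)%:E)%E.
Proof.
move=> c0 mg g0; have gf0 f x : 0 <= \prod_t g (f t) x by rewrite prodr_ge0.
have mgf f : measurable_fun setT (fun x => \prod_t g (f t) x).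
  by apply: measurable_prod => t _; exact: mg.
under eq_integral do rewrite exprMn exprn_sum_ffun EFinM -sumEFin.
rewrite ge0_integralZl_EFin ?exprn_ge0 //.
- by rewrite ge0_integral_sum // => [f|f x _]; [exact/measurable_EFinP | rewrite lee_fin].
- by move=> x _; apply: sume_ge0 => f _; rewrite lee_fin.
- by apply: emeasurable_sum => f; exact/measurable_EFinP.
Qed.

Lemma ge0_integral_prod_fst d1 d2 (T1 : measurableType d1) (T2 : measurableType d2)
    (R : realType) (mu : probability T1 R) (nu : probability T2 R) (F : T1 -> R) :
  measurable_fun setT F -> (forall x, 0 <= F x) ->
  (\int[mu \x nu]_p (F p.1)%:E = \int[mu]_x (F x)%:E)%E.
Proof.
move=> mF F0; rewrite fubini_tonelli1 //=; last 2 first.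
- by apply/measurable_EFinP; exact: measurableT_comp.
- by move=> p; rewrite lee_fin.
apply: eq_integral => x _; rewrite /fubini_F.
rewrite -[LHS]/(\int[nu]_y (cst (F x)%:E) y)%E integral_cst //.
by rewrite -[X in (_ * X)%E]/(nu setT) probability_setT mule1.
Qed.

Section empirical_evaluation.
Context d (Z : measurableType d) (R : realType) (n : nat) (M : mechanism Z R n).
Variables (eps delta B : R).
Hypotheses (eps0 : 0 <= eps) (delta0 : 0 <= delta) (B0 : 0 <= B).
Hypotheses (dpM : dp_eval M eps delta) (MB : bounded_in M B) (mM : mech_measurable M).

Lemma group_privacy_mech_mean r (S S' : n.-tuple Z) z : (#|tdiff S S'| <= r)%N ->
  mech_mean M S z <= expR (r%:R * eps) * (mech_mean M S' z + r%:R * (delta * B)).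
Proof.
rewrite expRM_natl; apply: (group_privacy (m := mech_mean M ^~ z)).
- by rewrite leNgt expR_lt1 -leNgt.
- exact: mulr_ge0.
- by move=> T; exact: mech_mean_ge0.
- by move=> T T'; exact: dp_mech_mean.
Qed.

Lemma measurable_mech_mean_comp d' (X : measurableType d') (a : X -> n.-tuple Z)
    (b : X -> Z) : measurable_fun setT a -> measurable_fun setT b ->
  measurable_fun setT (fun x => mech_mean M (a x) (b x)).
Proof.
move=> ma mb.
exact: measurableT_comp (measurable_mech_mean MB B0 mM) (measurable_fun_pair ma mb).
Qed.

Lemma emp_eval_addrE (S T : n.-tuple Z) (a : R) : (0 < n)%N ->
  emp_eval M S T + a = n%:R^-1 * \sum_(i < n) (mech_mean M S (tnth T i) + a).
Proof.
move=> n_gt0; rewrite big_split /= sumr_const card_ord mulrDr -[a *+ n]mulr_natl mulrA.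
by rewrite mulVf ?mul1r // pnatr_eq0 -lt0n.
Qed.

Lemma prod_mech_mean_tmix_le k (f : 'I_k -> 'I_n) (I : {set 'I_n}) (S S' : n.-tuple Z) :
  (forall t, f t \in I) -> (#|I| <= k)%N ->
  \prod_t mech_mean M (tmix I S S') (tnth (tmix I S' S) (f t)) <=
  expR ((k ^ 2)%:R * eps) * \prod_t (mech_mean M S (tnth S (f t)) + k%:R * (delta * B)).
Proof.
move=> fI Ik; under eq_bigr do rewrite tnth_tmix fI.
have dI : (#|tdiff (tmix I S S') S| <= k)%N.
  exact: leq_trans (subset_leq_card (tdiff_tmix_subset _ _ _)) Ik.
rewrite -mulnn natrM -mulrA expRM_natl -[k in _ ^+ k]card_ord -prodr_const -big_split /=.
apply: ler_prod => t _; rewrite (mech_mean_ge0 MB B0) /=.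
exact: group_privacy_mech_mean.
Qed.

Variables (P : probability Z R) (Pn : probability (n.-tuple Z) R).
Local Open Scope ereal_scope.

Lemma integral_emp_eval_exprn k :
  \int[Pn \x Pn]_p ((emp_eval M p.1 p.2) ^+ k)%:E = (n%:R^-1 ^+ k)%:E *
    \sum_(f : {ffun 'I_k -> 'I_n})
      \int[Pn \x Pn]_p (\prod_t mech_mean M p.1 (tnth p.2 (f t)))%:E.
Proof.
apply: ge0_integral_exprn_sum; rewrite ?invr_ge0 //.
- move=> i; apply: (measurable_mech_mean_comp (a := fst)) => //.
  exact: measurableT_comp (measurable_tnth i) measurable_snd.
- by move=> i p; exact: mech_mean_ge0.
Qed.

Lemma integral_emp_eval_addr_exprn (a : R) k : (0 < n)%N -> (0 <= a)%R ->
  \int[Pn]_S ((emp_eval M S S + a) ^+ k)%:E = (n%:R^-1 ^+ k)%:E *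
    \sum_(f : {ffun 'I_k -> 'I_n})
      \int[Pn]_S (\prod_t (mech_mean M S (tnth S (f t)) + a))%:E.
Proof.
move=> n_gt0 a0; under eq_integral do rewrite emp_eval_addrE //.
apply: ge0_integral_exprn_sum; rewrite ?invr_ge0 //.
- move=> i; apply: measurable_funD => //.
  by apply: measurable_mech_mean_comp => //; exact: measurable_tnth.
- by move=> i S; rewrite addr_ge0 ?(mech_mean_ge0 MB B0).
Qed.

Hypothesis PnE : is_product_prob P Pn.

Lemma integral_swapped_term_le k (f : {ffun 'I_k -> 'I_n}) :
  \int[Pn \x Pn]_p (\prod_t mech_mean M p.1 (tnth p.2 (f t)))%:E <=
  (expR ((k ^ 2)%:R * eps))%:E *
  \int[Pn]_S (\prod_t (mech_mean M S (tnth S (f t)) + k%:R * (delta * B)))%:E.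
Proof.
have mean0 := mech_mean_ge0 MB B0.
have a0 : (0 <= k%:R * (delta * B))%R by rewrite !mulr_ge0.
pose F p := (\prod_t mech_mean M p.1 (tnth p.2 (f t)))%R.
pose G S := (\prod_t (mech_mean M S (tnth S (f t)) + k%:R * (delta * B)))%R.
have mF : measurable_fun setT F.
  apply: measurable_prod => t _; apply: measurable_mech_mean_comp => //.
  exact: measurableT_comp (measurable_tnth _) measurable_snd.
have mG : measurable_fun setT G.
  apply: measurable_prod => t _; apply: measurable_funD => //.
  by apply: measurable_mech_mean_comp => //; exact: measurable_tnth.
have F0 p : (0 <= (F p)%:E) by rewrite lee_fin prodr_ge0.
have G0 S : (0 <= G S)%R by rewrite prodr_ge0 // => t _; rewrite addr_ge0.
rewrite -(ge0_integral_prod_fst Pn Pn mG G0).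
rewrite -ge0_integralZl_EFin ?expR_ge0 //; last 2 first.
- by move=> p _; rewrite lee_fin.
- by apply/measurable_EFinP; exact: measurableT_comp.
rewrite -(integral_tswap PnE [set f t | t in 'I_k]%SET); last 2 first.
- by apply/measurable_EFinP; exact: mF.
- exact: F0.
apply: ge0_le_integral => //.
- by move=> p _; exact: F0.
- by apply/measurable_EFinP; exact: measurableT_comp mF (measurable_tswap _).
- by apply: emeasurable_funM => //; apply/measurable_EFinP; exact: measurableT_comp.
move=> p _; rewrite -EFinM lee_fin; apply: prod_mech_mean_tmix_le.
- by move=> t; apply/imsetP; exists t.
- by apply: leq_trans (leq_imset_card _ _) _; rewrite card_ord.
Qed.

End empirical_evaluation.

Lemma emp_eval_dim0 d (Z : measurableType d) (R : realType) (M : mechanism Z R 0)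
  (S T : 0.-tuple Z) : emp_eval M S T = 0.
Proof. by rewrite /emp_eval big_ord0 mulr0. Qed.

Unset Implicit Arguments.

Theorem lemma29 (d : measure_display) (Z : measurableType d) (R : realType)
  (n : nat) (M : mechanism Z R n) (eps delta B : R)
  (P : probability Z R) (Pn : probability (n.-tuple Z) R) (k : nat) :
  0 <= eps -> 0 <= delta ->
  dp_eval M eps delta -> bounded_in M B -> mech_measurable M ->
  is_product_prob P Pn -> (0 < k)%N ->
  (\int[Pn \x Pn]_SS' ((emp_eval M SS'.1 SS'.2) ^+ k)%:E
   <= (expR ((k ^ 2)%:R * eps))%:E *
      \int[Pn]_S ((emp_eval M S S + k%:R * delta * B) ^+ k)%:E)%E.
Proof.
move=> eps0 delta0 dpM MB mM PnE k_gt0.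
have [z _] := probability_setT_neq0 P.
have B0 := bounded_in_ge0 MB z.
have [n0|n_gt0] := posnP n.
  subst n; under eq_integral do rewrite emp_eval_dim0 expr0n gtn_eqF //.
  rewrite integral0 mule_ge0 ?lee_fin ?expR_ge0 // integral_ge0 // => S _.
  by rewrite emp_eval_dim0 add0r lee_fin exprn_ge0 ?mulr_ge0.
rewrite -mulrA (integral_emp_eval_exprn B0 MB mM).
rewrite (integral_emp_eval_addr_exprn B0 MB mM) ?mulr_ge0 // muleCA.
apply: lee_wpmul2l; first by rewrite lee_fin exprn_ge0 ?invr_ge0.
rewrite ge0_sume_distrr => [|f _]; last first.
  apply: integral_ge0 => S _; rewrite lee_fin prodr_ge0 // => t _.
  by rewrite addr_ge0 ?(mech_mean_ge0 MB B0) ?mulr_ge0.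
by apply: lee_sum => f _; exact: (integral_swapped_term_le eps0 delta0 B0 dpM MB mM PnE).
Qed.
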